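(* Consider the generalized $q$-Toda hierarchy on the Lax operator $\mathcal L=\Lambda_\epsilon+u+e^{v}\Lambda_\epsilon^{-1}$, with flows $\epsilon\partial_{t_j}\mathcal L=[(B_j)_+,\mathcal L]$, $B_j=\mathcal L^j/j!$. Let $H_j=\int h_j\,dx$ with $h_j=\frac{1}{j!}\operatorname{Res}\mathcal L^j$. Then the flows are Hamiltonian with respect to the first Poisson bracket, $$\frac{\partial w}{\partial t_j}=\{w,H_j\}_1,\qquad w\in\{u,v\},\ j\ge 0,$$ and they satisfy the bi-Hamiltonian recursion relation $\{\cdot,H_{n-1}\}_2=n\{\cdot,H_n\}_1$ for $n\ge1$.
   Context: Fix $\epsilon>0$; $\Lambda_\epsilon=e^{\epsilon x^2\partial_x}$ acts by $\Lambda_\epsilon^j g(x)=g\!\left(\frac{x}{1-j\epsilon x}\right)$, $j\in\mathbb{Z}$. Difference operators $A=\sum_k A_k(x)\Lambda_\epsilon^k$ multiply by $(X\Lambda_\epsilon^i)\circ(Y\Lambda_\epsilon^j)=X(x)Y\!\left(\frac{x}{1-i\epsilon x}\right)\Lambda_\epsilon^{i+j}$; $A_+=\sum_{k\ge0}A_k\Lambda_\epsilon^k$ and $\operatorname{Res}A=A_0$. For a local functional $H=\int h\,dx$ and $w\in\{u,v\}$, $\{w,H\}_i=\sum_{w'\in\{u,v\}}P_i^{ww'}\frac{\delta H}{\delta w'}$, where $\frac{\delta H}{\delta w'}$ is the variational derivative and the operators $P_i^{ww'}$ are given by the brackets (with $\delta(x-y)$ the delta function): $\{u(x),u(y)\}_1=\{v(x),v(y)\}_1=0$,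 $\{u(x),v(y)\}_1=\frac1\epsilon[\Lambda_\epsilon-1]\delta(x-y)$, $\{v(x),u(y)\}_1=\frac1\epsilon[1-\Lambda_\epsilon^{-1}]\delta(x-y)$; $\{u(x),u(y)\}_2=\frac1\epsilon[\Lambda_\epsilon e^{v(x)}-e^{v(x)}\Lambda_\epsilon^{-1}]\delta(x-y)$, $\{u(x),v(y)\}_2=\frac1\epsilon u(x)[\Lambda_\epsilon-1]\delta(x-y)$, $\{v(x),u(y)\}_2=\frac1\epsilon[1-\Lambda_\epsilon^{-1}]u(x)\delta(x-y)$, $\{v(x),v(y)\}_2=\frac1\epsilon[\Lambda_\epsilon-\Lambda_\epsilon^{-1}]\delta(x-y)$. *)

From Stdlib Require Import Reals ZArith List.
Import ListNotations.
Open Scope R_scope.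

(* DU k stands for (Lambda_eps^k u)(x) = u(x/(1-k eps x)),            *)
(* DW k stands for (Lambda_eps^k e^v)(x) = exp(v(x/(1-k eps x))).     *)
Inductive dpoly : Type :=
| DC : R -> dpoly
| DU : Z -> dpoly
| DW : Z -> dpoly
| DAdd : dpoly -> dpoly -> dpoly
| DMul : dpoly -> dpoly -> dpoly.

Fixpoint dshift (n : Z) (p : dpoly) : dpoly :=
  match p with
  | DC c => DC c
  | DU k => DU (k + n)%Z
  | DW k => DW (k + n)%Z
  | DAdd a b => DAdd (dshift n a) (dshift n b)
  | DMul a b => DMul (dshift n a) (dshift n b)
  end.

Fixpoint d_du (k : Z) (p : dpoly) : dpoly :=
  match p with
  | DC _ => DC 0
  | DU j => if Z.eqb j k then DC 1 else DC 0
  | DW _ => DC 0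
  | DAdd a b => DAdd (d_du k a) (d_du k b)
  | DMul a b => DAdd (DMul (d_du k a) b) (DMul a (d_du k b))
  end.

(* partial derivative with respect to v_k = Lambda^k v  (d e^{v_k}/d v_k = e^{v_k}) *)
Fixpoint d_dv (k : Z) (p : dpoly) : dpoly :=
  match p with
  | DC _ => DC 0
  | DU _ => DC 0
  | DW j => if Z.eqb j k then DW j else DC 0
  | DAdd a b => DAdd (d_dv k a) (d_dv k b)
  | DMul a b => DAdd (DMul (d_dv k a) b) (DMul a (d_dv k b))
  end.

Fixpoint dsupp (p : dpoly) : nat :=
  match p with
  | DC _ => 0%nat
  | DU k => Z.to_nat (Z.abs k)
  | DW k => Z.to_nat (Z.abs k)
  | DAdd a b => Nat.max (dsupp a) (dsupp b)
  | DMul a b => Nat.max (dsupp a) (dsupp b)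
  end.

Definition dsum (l : list dpoly) : dpoly := fold_right DAdd (DC 0) l.

Definition zrange (N : nat) : list Z :=
  map (fun i => (Z.of_nat i - Z.of_nat N)%Z) (seq 0 (2 * N + 1)).

Inductive field := Vu | Vv.

Definition var_der (w : field) (h : dpoly) : dpoly :=
  dsum (map (fun k => dshift (- k) (match w with Vu => d_du k h | Vv => d_dv k h end))
            (zrange (dsupp h))).

(* Difference operators  sum_k A_k Lambda^k  as lists of (k, A_k).    *)
Definition dop := list (Z * dpoly).

Definition dop_add (A B : dop) : dop := A ++ B.
Definition dop_scale (c : R) (A : dop) : dop := map (fun a => (fst a, DMul (DC c) (snd a))) A.
Definition dop_sub (A B : dop) : dop := dop_add A (dop_scale (-1) B).
(* (X Lambda^i) o (Y Lambda^j) = X (Lambda^i Y) Lambda^(i+j) *)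
Definition dop_mul (A B : dop) : dop :=
  flat_map (fun a => map (fun b => ((fst a + fst b)%Z, DMul (snd a) (dshift (fst a) (snd b)))) B) A.
Fixpoint dop_pow (A : dop) (n : nat) : dop :=
  match n with O => [(0%Z, DC 1)] | S m => dop_mul A (dop_pow A m) end.
Definition dop_comm (A B : dop) : dop := dop_sub (dop_mul A B) (dop_mul B A).
Definition dop_coef (k : Z) (A : dop) : dpoly :=
  dsum (map snd (filter (fun a => Z.eqb (fst a) k) A)).
Definition dop_res (A : dop) : dpoly := dop_coef 0 A.
Definition dop_plus (A : dop) : dop := filter (fun a => Z.leb 0 (fst a)) A.
Definition dop_apply (P : dop) (f : dpoly) : dpoly :=
  dsum (map (fun a => DMul (snd a) (dshift (fst a) f)) P).

Definition Lam : dop := [(1%Z, DC 1)].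
Definition Laminv : dop := [((-1)%Z, DC 1)].
Definition Id : dop := [(0%Z, DC 1)].
Definition Mult (f : dpoly) : dop := [(0%Z, f)].

Definition Lax : dop := dop_add Lam (dop_add (Mult (DU 0)) (dop_mul (Mult (DW 0)) Laminv)).

Definition Bop (j : nat) : dop := dop_scale (/ INR (fact j)) (dop_pow Lax j).

(* eps * d L / d t_j = [(B_j)_+, L] *)
Definition lax_rhs (j : nat) : dop := dop_comm (dop_plus (Bop j)) Lax.

Definition hdens (j : nat) : dpoly :=
  DMul (DC (/ INR (fact (S j)))) (dop_res (dop_pow Lax (S j))).

Definition P1 (eps : R) (w w' : field) : dop :=
  match w, w' with
  | Vu, Vu => []
  | Vv, Vv => []
  | Vu, Vv => dop_scale (/ eps) (dop_sub Lam Id)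
  | Vv, Vu => dop_scale (/ eps) (dop_sub Id Laminv)
  end.

Definition P2 (eps : R) (w w' : field) : dop :=
  match w, w' with
  | Vu, Vu => dop_scale (/ eps) (dop_sub (dop_mul Lam (Mult (DW 0))) (dop_mul (Mult (DW 0)) Laminv))
  | Vu, Vv => dop_scale (/ eps) (dop_mul (Mult (DU 0)) (dop_sub Lam Id))
  | Vv, Vu => dop_scale (/ eps) (dop_mul (dop_sub Id Laminv) (Mult (DU 0)))
  | Vv, Vv => dop_scale (/ eps) (dop_sub Lam Laminv)
  end.

Definition ham (P : field -> field -> dop) (w : field) (h : dpoly) : dpoly :=
  DAdd (dop_apply (P w Vu) (var_der Vu h)) (dop_apply (P w Vv) (var_der Vv h)).

Definition lam_pt (eps : R) (k : Z) (x : R) : R := x / (1 - IZR k * eps * x).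

Fixpoint deval (eps : R) (u v : R -> R) (x : R) (p : dpoly) : R :=
  match p with
  | DC c => c
  | DU k => u (lam_pt eps k x)
  | DW k => exp (v (lam_pt eps k x))
  | DAdd a b => deval eps u v x a + deval eps u v x b
  | DMul a b => deval eps u v x a * deval eps u v x b
  end.

(* Evaluate everything at a jet [a k = Lambda^k u], [b k = Lambda^k e^v] and represent a
   difference operator by its Z x Z matrix, so that L is tridiagonal with entries [1], [a i],
   [b i].  Then [Res L^n] shifted by [s] is [(L^n) s s], and the variational derivative, which
   sums [Lambda^(-k)] of the partial derivatives in [u_k], becomes the trace of the derivative
   of [L^(n+1)] in one entry: [dH_n/du = (L^n) 0 0 / n!] and [dH_n/dv = b 0 (L^n) (-1) 0 / n!].
   The flows are then read off the two lowest diagonals of [[(B_j)_+, L]], and the recursion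
   follows from [L^(n+1) = L L^n = L^n L] together with
   [(L^n) (i+1) i = b (i+1) (L^n) i (i+1)], which holds because a diagonal gauge conjugates
   L to a symmetric matrix. *)

From Stdlib Require Import Reals ZArith List Lia Lra FunctionalExtensionality.
From Coquelicot Require Import Coquelicot.
Import ListNotations.
Open Scope R_scope.

Fixpoint ev (a b : Z -> R) (p : dpoly) : R :=
  match p with
  | DC c => c
  | DU k => a k
  | DW k => b k
  | DAdd p q => ev a b p + ev a b q
  | DMul p q => ev a b p * ev a b q
  end.

Definition zshift (s : Z) (f : Z -> R) : Z -> R := fun k => f (k + s)%Z.
Definition zupd (f : Z -> R) (k : Z) (t : R) : Z -> R :=
  fun j => if Z.eqb j k then t else f j.

Lemma deval_ev eps u v x p : deval eps u v x p =
  ev (fun k => u (lam_pt eps k x)) (fun k => exp (v (lam_pt eps k x))) p.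
Proof. induction p; simpl; auto; rewrite IHp1, IHp2; auto. Qed.

Lemma ev_dshift a b n p : ev a b (dshift n p) = ev (zshift n a) (zshift n b) p.
Proof. induction p; simpl; auto; rewrite IHp1, IHp2; auto. Qed.

Lemma zshift0 f : zshift 0 f = f.
Proof. apply functional_extensionality; intro k; unfold zshift; now rewrite Z.add_0_r. Qed.

Lemma zshift_shift s t f : zshift s (zshift t f) = zshift (t + s) f.
Proof. apply functional_extensionality; intro k; unfold zshift; f_equal; lia. Qed.

Lemma zshift_upd f k t : zshift (- k) (zupd f 0 t) = zupd (zshift (- k) f) k t.
Proof.
  apply functional_extensionality; intro j; unfold zupd, zshift.
  destruct (Z.eqb_spec (j + - k) 0), (Z.eqb_spec j k); auto; lia.
Qed.

Lemma zupd_id f k : zupd f k (f k) = f.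
Proof.
  apply functional_extensionality; intro j; unfold zupd.
  destruct (Z.eqb_spec j k); subst; auto.
Qed.

Definition lsum {A} (f : A -> R) (l : list A) : R := fold_right (fun x acc => f x + acc) 0 l.

Lemma lsum_app {A} (f : A -> R) l1 l2 : lsum f (l1 ++ l2) = lsum f l1 + lsum f l2.
Proof. induction l1; simpl; [ring | rewrite IHl1; ring]. Qed.

Lemma lsum_map {A B} (f : B -> R) (g : A -> B) l : lsum f (map g l) = lsum (fun x => f (g x)) l.
Proof. induction l; simpl; auto. now rewrite IHl. Qed.

Lemma lsum_plus {A} (f g : A -> R) l : lsum (fun x => f x + g x) l = lsum f l + lsum g l.
Proof. induction l; simpl; [ring | rewrite IHl; ring]. Qed.

Lemma lsum_scal {A} (c : R) (f : A -> R) l : lsum (fun x => c * f x) l = c * lsum f l.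
Proof. induction l; simpl; [ring | rewrite IHl; ring]. Qed.

Lemma lsum_const {A} (c : R) (l : list A) : lsum (fun _ => c) l = INR (length l) * c.
Proof. induction l; simpl lsum; [simpl; ring | rewrite IHl, length_cons, S_INR; ring]. Qed.

Lemma lsum_ext_in {A} (f g : A -> R) l : (forall x, In x l -> f x = g x) -> lsum f l = lsum g l.
Proof. induction l; intro H; simpl; auto. rewrite IHl, H; simpl; auto. intros; apply H; simpl; auto. Qed.

Lemma lsum_comm {A B} (F : A -> B -> R) l1 l2 :
  lsum (fun x => lsum (F x) l2) l1 = lsum (fun y => lsum (fun x => F x y) l1) l2.
Proof.
  induction l1; simpl.
  - induction l2; simpl; auto. rewrite <- IHl2; ring.
  - rewrite IHl1, <- lsum_plus. reflexivity.
Qed.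

Lemma ev_dsum a b l : ev a b (dsum l) = lsum (ev a b) l.
Proof. induction l; simpl; auto. now rewrite IHl. Qed.

Definition dop_mat (a b : Z -> R) (A : dop) (i j : Z) : R :=
  ev (zshift i a) (zshift i b) (dop_coef (j - i) A).

Lemma ev_dop_coef a b k A : ev a b (dop_coef k A) = dop_mat a b A 0 k.
Proof. unfold dop_mat. now rewrite !zshift0, Z.sub_0_r. Qed.

Lemma dop_mat_cons a b x A i j : dop_mat a b (x :: A) i j =
  (if Z.eqb (fst x) (j - i) then ev (zshift i a) (zshift i b) (snd x) else 0) + dop_mat a b A i j.
Proof. unfold dop_mat, dop_coef; simpl. destruct (Z.eqb (fst x) (j - i)); simpl; ring. Qed.

Lemma dop_mat_app a b A B i j : dop_mat a b (A ++ B) i j = dop_mat a b A i j + dop_mat a b B i j.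
Proof. induction A; simpl; [unfold dop_mat; simpl; ring |]. rewrite !dop_mat_cons, IHA; ring. Qed.

Lemma dop_mat_scale a b c A i j : dop_mat a b (dop_scale c A) i j = c * dop_mat a b A i j.
Proof.
  induction A as [|x A IH]; [unfold dop_mat; simpl; ring |].
  change (dop_scale c (x :: A)) with ((fst x, DMul (DC c) (snd x)) :: dop_scale c A).
  rewrite !dop_mat_cons, IH; simpl. destruct (Z.eqb (fst x) (j - i)); ring.
Qed.

Lemma dop_mat_sub a b A B i j : dop_mat a b (dop_sub A B) i j = dop_mat a b A i j - dop_mat a b B i j.
Proof. unfold dop_sub, dop_add. rewrite dop_mat_app, dop_mat_scale. ring. Qed.

Lemma dop_mat_plus a b A i j :
  dop_mat a b (dop_plus A) i j = if Z.leb i j then dop_mat a b A i j else 0.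
Proof.
  induction A as [|x A IH]; [destruct (Z.leb i j); reflexivity |].
  unfold dop_plus in *; simpl. rewrite dop_mat_cons.
  destruct (Z.leb_spec 0 (fst x)); [rewrite dop_mat_cons |]; rewrite IH;
    destruct (Z.eqb_spec (fst x) (j - i)), (Z.leb_spec i j); try lia; ring.
Qed.

Lemma dop_mat_mul a b A B i j : dop_mat a b (dop_mul A B) i j =
  lsum (fun x => ev (zshift i a) (zshift i b) (snd x) * dop_mat a b B (i + fst x) j) A.
Proof.
  induction A as [|x A IH]; simpl; [reflexivity |].
  unfold dop_mul in *; simpl. rewrite dop_mat_app, IH. f_equal. clear IH.
  induction B as [|y B IHB]; simpl; [unfold dop_mat; simpl; ring |].
  rewrite !dop_mat_cons, IHB; simpl. rewrite ev_dshift, !zshift_shift.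
  destruct (Z.eqb_spec (fst x + fst y) (j - i)), (Z.eqb_spec (fst y) (j - (i + fst x)));
    try lia; ring.
Qed.

Lemma Lax_eq : Lax = [(1%Z, DC 1); (0%Z, DU 0); ((-1)%Z, DMul (DW 0) (DC 1))].
Proof. reflexivity. Qed.

Lemma dop_mat_Lax a b i j : dop_mat a b Lax i j =
  (if Z.eqb j (i + 1) then 1 else 0) + (if Z.eqb j i then a i else 0)
  + (if Z.eqb j (i - 1) then b i else 0).
Proof.
  rewrite Lax_eq, !dop_mat_cons. unfold dop_mat, zshift; cbn [fst snd ev dop_coef filter dsum map fold_right]. rewrite Z.add_0_l.
  destruct (Z.eqb_spec 1 (j - i)), (Z.eqb_spec j (i + 1)), (Z.eqb_spec 0 (j - i)),
    (Z.eqb_spec j i), (Z.eqb_spec (-1) (j - i)), (Z.eqb_spec j (i - 1)); try lia; ring.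
Qed.

Lemma dop_mat_mul_Lax_l a b A i j : dop_mat a b (dop_mul Lax A) i j =
  dop_mat a b A (i + 1) j + a i * dop_mat a b A i j + b i * dop_mat a b A (i - 1) j.
Proof.
  rewrite dop_mat_mul, Lax_eq. unfold zshift; simpl.
  replace (i + 0)%Z with i by lia. replace (i + -1)%Z with (i - 1)%Z by lia. ring.
Qed.

Lemma dop_mat_mul_Lax_r a b A i j : dop_mat a b (dop_mul A Lax) i j =
  dop_mat a b A i (j - 1) + a j * dop_mat a b A i j + b (j + 1)%Z * dop_mat a b A i (j + 1).
Proof.
  rewrite dop_mat_mul. induction A as [|x A IH]; [unfold dop_mat; simpl; ring |].
  simpl. rewrite IH, !dop_mat_cons, dop_mat_Lax. clear IH.
  destruct (Z.eqb_spec j (i + fst x + 1)), (Z.eqb_spec (fst x) (j - 1 - i)),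
    (Z.eqb_spec j (i + fst x)), (Z.eqb_spec (fst x) (j - i)),
    (Z.eqb_spec j (i + fst x - 1)), (Z.eqb_spec (fst x) (j + 1 - i)); try lia;
    try (subst j; replace (i + fst x - 1 + 1)%Z with (i + fst x)%Z by lia); try subst j; ring.
Qed.

Definition laxpow (a b : Z -> R) (n : nat) (i j : Z) : R := dop_mat a b (dop_pow Lax n) i j.

Lemma laxpow_0 a b i j : laxpow a b 0 i j = if Z.eqb i j then 1 else 0.
Proof.
  unfold laxpow, dop_mat; simpl. destruct (Z.eqb_spec i j).
  - subst. rewrite Z.sub_diag. simpl. ring.
  - destruct (j - i)%Z eqn:E; [lia | simpl; ring | simpl; ring].
Qed.

Lemma laxpow_S a b n i j : laxpow a b (S n) i j =
  laxpow a b n (i + 1) j + a i * laxpow a b n i j + b i * laxpow a b n (i - 1) j.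
Proof. apply dop_mat_mul_Lax_l. Qed.

Lemma laxpow_S_r a b n i j : laxpow a b (S n) i j =
  laxpow a b n i (j - 1) + a j * laxpow a b n i j + b (j + 1)%Z * laxpow a b n i (j + 1).
Proof.
  revert i j; induction n as [|n IH]; intros i j.
  - rewrite laxpow_S, !laxpow_0.
    destruct (Z.eqb_spec (i + 1) j), (Z.eqb_spec i (j - 1)), (Z.eqb_spec i j),
      (Z.eqb_spec (i - 1) j), (Z.eqb_spec i (j + 1)); try lia;
      try subst j; try rewrite Z.sub_add; ring.
  - rewrite (laxpow_S _ _ (S n) i j), (IH (i + 1)%Z j), (IH (i - 1)%Z j),
      (laxpow_S _ _ n i (j - 1)), (laxpow_S _ _ n i (j + 1)).
    rewrite (IH i j) at 1. rewrite (laxpow_S _ _ n i j). ring.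
Qed.

Lemma laxpow_symm a b (g : Z -> R) : (forall j, g (j + 1)%Z = b (j + 1)%Z * g j) ->
  forall n i j, laxpow a b n j i * g i = laxpow a b n i j * g j.
Proof.
  intros Hg n; induction n as [|n IH]; intros i j.
  - rewrite !laxpow_0. destruct (Z.eqb_spec j i), (Z.eqb_spec i j); try lia; try subst; ring.
  - rewrite laxpow_S, laxpow_S_r.
    transitivity (laxpow a b n (j + 1) i * g i + a j * (laxpow a b n j i * g i)
                  + b j * (laxpow a b n (j - 1) i * g i)); [ring |].
    rewrite (IH i (j + 1)%Z), (IH i j), (IH i (j - 1)%Z), (Hg j).
    specialize (Hg (j - 1)%Z). rewrite Z.sub_add in Hg. rewrite Hg. ring.
Qed.

Fixpoint gauge_pos (b : Z -> R) (n : nat) : R :=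
  match n with O => 1 | S m => b (Z.of_nat (S m)) * gauge_pos b m end.
Fixpoint gauge_neg (b : Z -> R) (n : nat) : R :=
  match n with O => 1 | S m => gauge_neg b m / b (- Z.of_nat m)%Z end.
Definition gauge (b : Z -> R) (z : Z) : R :=
  if Z.leb 0 z then gauge_pos b (Z.to_nat z) else gauge_neg b (Z.to_nat (- z)).

Section Gauge.
Variable b : Z -> R.
Hypothesis b_neq0 : forall k, b k <> 0.

Lemma gauge_neq0 z : gauge b z <> 0.
Proof.
  unfold gauge. destruct (Z.leb 0 z); [generalize (Z.to_nat z) | generalize (Z.to_nat (- z))];
    intro n; induction n; simpl; try lra.
  - apply Rmult_integral_contrapositive; auto.
  - apply Rmult_integral_contrapositive; split; auto. apply Rinv_neq_0_compat; auto.
Qed.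

Lemma gauge_S j : gauge b (j + 1)%Z = b (j + 1)%Z * gauge b j.
Proof.
  unfold gauge. destruct (Z.leb_spec 0 j), (Z.leb_spec 0 (j + 1)); try lia.
  - replace (Z.to_nat (j + 1)) with (S (Z.to_nat j)) by lia; simpl.
    do 2 f_equal; lia.
  - replace j with (-1)%Z by lia. simpl. field. auto.
  - replace (Z.to_nat (- j)) with (S (Z.to_nat (- (j + 1)))) by lia; simpl.
    replace (- Z.of_nat (Z.to_nat (- (j + 1))))%Z with (j + 1)%Z by lia.
    field. auto.
Qed.

Lemma laxpow_sub_super a n i :
  laxpow a b n (i + 1) i = b (i + 1)%Z * laxpow a b n i (i + 1).
Proof.
  apply Rmult_eq_reg_r with (gauge b i); [| apply gauge_neq0].
  rewrite laxpow_symm with (g := gauge b) by exact gauge_S.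
  rewrite gauge_S. ring.
Qed.

End Gauge.

Lemma zrange_S M : zrange (S M) = ((- Z.of_nat (S M))%Z :: zrange M) ++ [Z.of_nat (S M)].
Proof.
  unfold zrange.
  replace (2 * S M + 1)%nat with (S ((2 * M + 1) + 1)) by lia.
  change (seq 0 (S (2 * M + 1 + 1))) with (0%nat :: seq 1 (2 * M + 1 + 1)).
  rewrite seq_app. cbn [map]. rewrite map_app. cbn [app].
  f_equal; f_equal.
  - rewrite <- seq_shift, map_map. apply map_ext. intro y. lia.
  - cbn [seq map]. f_equal. lia.
Qed.

Lemma lsum_zrange_S (f : Z -> R) M :
  lsum f (zrange (S M)) = f (- Z.of_nat (S M))%Z + lsum f (zrange M) + f (Z.of_nat (S M)).
Proof. rewrite zrange_S, lsum_app. simpl. ring. Qed.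

Lemma lsum_zrange_opp (f : Z -> R) M : lsum (fun k => f (- k)%Z) (zrange M) = lsum f (zrange M).
Proof.
  induction M as [|M IH]; [simpl; ring |].
  rewrite !lsum_zrange_S, IH, Z.opp_involutive. ring.
Qed.

Lemma lsum_zrange_extend (f : Z -> R) N M :
  (forall k, (Z.of_nat N < Z.abs k)%Z -> f k = 0) -> (N <= M)%nat ->
  lsum f (zrange N) = lsum f (zrange M).
Proof.
  intros Hf HNM. induction M as [|M IH].
  - now replace N with 0%nat by lia.
  - destruct (Nat.eq_dec N (S M)); [now subst |].
    rewrite lsum_zrange_S, <- IH, !Hf by lia. ring.
Qed.

Lemma lsum_zrange_delta (g : Z -> R) r M :
  lsum (fun k => (if Z.eqb r k then 1 else 0) * g k) (zrange M) =
  if Z.leb (Z.abs r) (Z.of_nat M) then g r else 0.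
Proof.
  induction M as [|M IH].
  - change (zrange 0) with [0%Z]; cbn [lsum fold_right].
    destruct (Z.eqb_spec r 0), (Z.leb_spec (Z.abs r) (Z.of_nat 0)); try lia; try subst; ring.
  - rewrite lsum_zrange_S, IH.
    destruct (Z.eqb_spec r (- Z.of_nat (S M))), (Z.eqb_spec r (Z.of_nat (S M))),
      (Z.leb_spec (Z.abs r) (Z.of_nat M)), (Z.leb_spec (Z.abs r) (Z.of_nat (S M))); try lia;
      try (subst r; ring); ring.
Qed.

(* The window [zrange M] contains every nonzero term of the matrix product. *)
Lemma laxpow_add a b q p r s M : (Z.abs r + Z.of_nat q <= Z.of_nat M)%Z ->
  lsum (fun k => laxpow a b q r k * laxpow a b p k s) (zrange M) = laxpow a b (q + p) r s.
Proof.
  revert r; induction q as [|q IH]; intros r Hr.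
  - rewrite (lsum_ext_in _ (fun k => (if Z.eqb r k then 1 else 0) * laxpow a b p k s))
      by (intros k _; now rewrite laxpow_0).
    rewrite lsum_zrange_delta. destruct (Z.leb_spec (Z.abs r) (Z.of_nat M)); [reflexivity | lia].
  - rewrite (lsum_ext_in _ (fun k => laxpow a b q (r + 1) k * laxpow a b p k s
        + (a r * (laxpow a b q r k * laxpow a b p k s)
        + b r * (laxpow a b q (r - 1) k * laxpow a b p k s))))
      by (intros k _; rewrite laxpow_S; ring).
    rewrite !lsum_plus, !lsum_scal, !IH by lia.
    change (S q + p)%nat with (S (q + p)). rewrite laxpow_S. ring.
Qed.

Lemma is_derive_Rconst (c x : R) : is_derive (fun _ => c) x 0.
Proof. exact (is_derive_const c x). Qed.

Lemma is_derive_Rid (x : R) : is_derive (fun t => t) x 1.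
Proof. exact (is_derive_id x). Qed.

Lemma is_derive_Rplus (f g : R -> R) x df dg : is_derive f x df -> is_derive g x dg ->
  is_derive (fun t => f t + g t) x (df + dg).
Proof. exact (is_derive_plus f g x df dg). Qed.

Lemma is_derive_Rmult (f g : R -> R) x df dg : is_derive f x df -> is_derive g x dg ->
  is_derive (fun t => f t * g t) x (df * g x + f x * dg).
Proof. intros Hf Hg. exact (is_derive_mult f g x df dg Hf Hg Rmult_comm). Qed.

Lemma is_derive_eq (f g : R -> R) x l1 l2 : (forall t, f t = g t) -> l1 = l2 ->
  is_derive f x l1 -> is_derive g x l2.
Proof. intros Hfg <-. exact (is_derive_ext f g x l1 Hfg). Qed.

(* The formal partial derivatives are the analytic ones; [d_dv] differentiates in
   [v_k], i.e. it is [e^(v_k)] times the derivative in the variable [b k = e^(v_k)]. *)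
Lemma ev_d_du a b k p l :
  is_derive (fun t => ev (zupd a k t) b p) (a k) l -> ev a b (d_du k p) = l.
Proof.
  assert (D : forall t0, is_derive (fun t => ev (zupd a k t) b p) t0 (ev (zupd a k t0) b (d_du k p))).
  { intro t0; induction p; simpl.
    - apply is_derive_Rconst.
    - unfold zupd. destruct (Z.eqb z k); [apply is_derive_Rid | apply is_derive_Rconst].
    - apply is_derive_Rconst.
    - now apply is_derive_Rplus.
    - now apply is_derive_Rmult. }
  intro Hl. specialize (D (a k)). rewrite zupd_id in D.
  now rewrite <- (is_derive_unique _ _ _ D), (is_derive_unique _ _ _ Hl).
Qed.

Lemma ev_d_dv a b k p l : b k <> 0 ->
  is_derive (fun t => ev a (zupd b k t) p) (b k) l -> ev a b (d_dv k p) = b k * l.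
Proof.
  assert (D : forall t0, t0 <> 0 ->
            is_derive (fun t => ev a (zupd b k t) p) t0 (ev a (zupd b k t0) (d_dv k p) / t0)).
  { intros t0 Ht0; induction p; simpl.
    - eapply is_derive_eq; [reflexivity | | apply is_derive_Rconst]. simpl. field. exact Ht0.
    - eapply is_derive_eq; [reflexivity | | apply is_derive_Rconst]. simpl. field. exact Ht0.
    - unfold zupd; destruct (Z.eqb_spec z k).
      + eapply is_derive_eq; [reflexivity | | apply is_derive_Rid].
        subst; simpl. rewrite Z.eqb_refl. field. exact Ht0.
      + eapply is_derive_eq; [reflexivity | | apply is_derive_Rconst]. simpl. field. exact Ht0.
    - eapply is_derive_eq; [reflexivity | | exact (is_derive_Rplus _ _ _ _ _ IHp1 IHp2)].
      simpl. field. exact Ht0.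
    - eapply is_derive_eq; [reflexivity | | exact (is_derive_Rmult _ _ _ _ _ IHp1 IHp2)].
      simpl. field. exact Ht0. }
  intros Hb Hl. specialize (D (b k) Hb). rewrite zupd_id in D.
  rewrite <- (is_derive_unique _ _ _ Hl), (is_derive_unique _ _ _ D). field. exact Hb.
Qed.

Lemma ev_d_du_out a b k p : (Z.of_nat (dsupp p) < Z.abs k)%Z -> ev a b (d_du k p) = 0.
Proof.
  induction p; simpl; intro H; auto.
  - destruct (Z.eqb_spec z k); simpl; [lia | reflexivity].
  - rewrite IHp1, IHp2 by lia. ring.
  - rewrite IHp1, IHp2 by lia. ring.
Qed.

Lemma ev_d_dv_out a b k p : (Z.of_nat (dsupp p) < Z.abs k)%Z -> ev a b (d_dv k p) = 0.
Proof.
  induction p; simpl; intro H; auto.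
  - destruct (Z.eqb_spec z k); simpl; [lia | reflexivity].
  - rewrite IHp1, IHp2 by lia. ring.
  - rewrite IHp1, IHp2 by lia. ring.
Qed.

(* The derivative of [(L^m) i j] in the entry [L 0 c], by the Leibniz rule for powers. *)
Definition dlaxpow (a b : Z -> R) (c : Z) (m : nat) (i j : Z) : R :=
  lsum (fun q => laxpow a b q c j * laxpow a b (m - 1 - q) i 0) (seq 0 m).

Lemma dlaxpow_S a b c m i j : dlaxpow a b c (S m) i j =
  dlaxpow a b c m (i + 1) j + a i * dlaxpow a b c m i j + b i * dlaxpow a b c m (i - 1) j
  + (if Z.eqb i 0 then laxpow a b m c j else 0).
Proof.
  unfold dlaxpow. rewrite seq_S, lsum_app. cbn [lsum fold_right plus].
  replace (S m - 1 - (0 + m))%nat with 0%nat by lia. rewrite Nat.add_0_l, laxpow_0.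
  rewrite (lsum_ext_in _ (fun q => laxpow a b q c j * laxpow a b (m - 1 - q) (i + 1) 0
     + (a i * (laxpow a b q c j * laxpow a b (m - 1 - q) i 0)
     + b i * (laxpow a b q c j * laxpow a b (m - 1 - q) (i - 1) 0)))).
  - rewrite !lsum_plus, !lsum_scal. destruct (Z.eqb i 0); ring.
  - intros q Hq. apply in_seq in Hq.
    replace (S m - 1 - q)%nat with (S (m - 1 - q)) by lia. rewrite laxpow_S. ring.
Qed.

Lemma lsum_dlaxpow_diag a b c m M : (Z.abs c <= 1)%Z -> (m <= M)%nat ->
  lsum (fun k => dlaxpow a b c m (- k) (- k)) (zrange M) = INR m * laxpow a b (m - 1) c 0.
Proof.
  intros Hc HM. rewrite (lsum_zrange_opp (fun k => dlaxpow a b c m k k)). unfold dlaxpow.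
  rewrite lsum_comm, <- (length_seq m 0), <- lsum_const, length_seq.
  apply lsum_ext_in. intros q Hq. apply in_seq in Hq.
  rewrite laxpow_add by lia. f_equal. lia.
Qed.

Lemma is_derive_zupd f k i t0 :
  is_derive (fun t => zupd f k t i) t0 (if Z.eqb i k then 1 else 0).
Proof. unfold zupd. destruct (Z.eqb i k); [apply is_derive_Rid | apply is_derive_Rconst]. Qed.

Lemma laxpow_derive_u a b m i j t0 :
  is_derive (fun t => laxpow (zupd a 0 t) b m i j) t0 (dlaxpow (zupd a 0 t0) b 0 m i j).
Proof.
  revert i j; induction m as [|m IH]; intros i j.
  - eapply is_derive_eq; [intro t; symmetry; apply laxpow_0 | | apply is_derive_Rconst].
    reflexivity.
  - eapply is_derive_eq; [intro t; symmetry; apply laxpow_S | |].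
    2: { apply is_derive_Rplus; [apply is_derive_Rplus |].
         - apply IH.
         - apply is_derive_Rmult; [| apply IH].
           apply is_derive_zupd.
         - apply is_derive_Rmult; [apply is_derive_Rconst | apply IH]. }
    rewrite dlaxpow_S. unfold zupd. destruct (Z.eqb_spec i 0); [subst |]; simpl; ring.
Qed.

Lemma laxpow_derive_v a b m i j t0 :
  is_derive (fun t => laxpow a (zupd b 0 t) m i j) t0 (dlaxpow a (zupd b 0 t0) (-1) m i j).
Proof.
  revert i j; induction m as [|m IH]; intros i j.
  - eapply is_derive_eq; [intro t; symmetry; apply laxpow_0 | | apply is_derive_Rconst].
    reflexivity.
  - eapply is_derive_eq; [intro t; symmetry; apply laxpow_S | |].
    2: { apply is_derive_Rplus; [apply is_derive_Rplus |].
         - apply IH.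
         - apply is_derive_Rmult; [apply is_derive_Rconst | apply IH].
         - apply is_derive_Rmult; [| apply IH].
           apply is_derive_zupd. }
    rewrite dlaxpow_S. unfold zupd. destruct (Z.eqb_spec i 0); [subst |]; simpl; ring.
Qed.

Lemma laxpow_zshift a b s n i j :
  laxpow (zshift s a) (zshift s b) n i j = laxpow a b n (i + s) (j + s).
Proof.
  unfold laxpow, dop_mat. rewrite !zshift_shift.
  replace (j + s - (i + s))%Z with (j - i)%Z by lia. now rewrite (Z.add_comm s i).
Qed.

Lemma ev_hdens_zshift a b n s :
  ev (zshift s a) (zshift s b) (hdens n) = / INR (fact (S n)) * laxpow a b (S n) s s.
Proof.
  unfold hdens, dop_res. cbn [ev]. rewrite ev_dop_coef.
  fold (laxpow (zshift s a) (zshift s b) (S n) 0 0). now rewrite laxpow_zshift.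
Qed.

Lemma inv_fact_S_mul n x : / INR (fact (S n)) * (INR (S n) * x) = x / INR (fact n).
Proof.
  rewrite fact_simpl, mult_INR. pose proof (INR_fact_neq_0 n).
  assert (INR (S n) <> 0) by (rewrite S_INR; pose proof (pos_INR n); lra).
  field; auto.
Qed.

Lemma ev_var_der_u a b n : ev a b (var_der Vu (hdens n)) = laxpow a b n 0 0 / INR (fact n).
Proof.
  assert (Hk : forall k, ev a b (dshift (- k) (d_du k (hdens n)))
                        = / INR (fact (S n)) * dlaxpow a b 0 (S n) (- k) (- k)).
  { intro k. rewrite ev_dshift. apply ev_d_du.
    replace (zshift (- k) a k) with (a 0%Z) by (unfold zshift; f_equal; lia).
    pose proof (laxpow_derive_u a b (S n) (- k) (- k) (a 0%Z)) as D. rewrite zupd_id in D.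
    eapply is_derive_eq; [| reflexivity | apply is_derive_scal, D].
    intro t. now rewrite <- zshift_upd, ev_hdens_zshift. }
  unfold var_der. rewrite ev_dsum, lsum_map.
  rewrite (lsum_zrange_extend _ _ (Nat.max (dsupp (hdens n)) (S n))).
  - rewrite (lsum_ext_in _ _ _ (fun k _ => Hk k)), lsum_scal, lsum_dlaxpow_diag by lia.
    replace (S n - 1)%nat with n by lia. apply inv_fact_S_mul.
  - intros k Hout. rewrite ev_dshift. apply ev_d_du_out. exact Hout.
  - lia.
Qed.

Lemma ev_var_der_v a b n : b 0%Z <> 0 ->
  ev a b (var_der Vv (hdens n)) = b 0%Z * laxpow a b n (-1) 0 / INR (fact n).
Proof.
  intro Hb.
  assert (Hk : forall k, ev a b (dshift (- k) (d_dv k (hdens n)))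
                        = b 0%Z * (/ INR (fact (S n)) * dlaxpow a b (-1) (S n) (- k) (- k))).
  { intro k. rewrite ev_dshift.
    replace (b 0%Z) with (zshift (- k) b k) by (unfold zshift; f_equal; lia).
    apply ev_d_dv; [unfold zshift; now replace (k + - k)%Z with 0%Z by lia |].
    replace (zshift (- k) b k) with (b 0%Z) by (unfold zshift; f_equal; lia).
    pose proof (laxpow_derive_v a b (S n) (- k) (- k) (b 0%Z)) as D. rewrite zupd_id in D.
    eapply is_derive_eq; [| reflexivity | apply is_derive_scal, D].
    intro t. now rewrite <- zshift_upd, ev_hdens_zshift. }
  unfold var_der. rewrite ev_dsum, lsum_map.
  rewrite (lsum_zrange_extend _ _ (Nat.max (dsupp (hdens n)) (S n))).
  - rewrite (lsum_ext_in _ _ _ (fun k _ => Hk k)), !lsum_scal, lsum_dlaxpow_diag by lia.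
    replace (S n - 1)%nat with n by lia. rewrite inv_fact_S_mul. unfold Rdiv. ring.
  - intros k Hout. rewrite ev_dshift. apply ev_d_dv_out. exact Hout.
  - lia.
Qed.

Lemma dop_mat_Bop_plus a b j i k :
  dop_mat a b (dop_plus (Bop j)) i k = if Z.leb i k then / INR (fact j) * laxpow a b j i k else 0.
Proof. rewrite dop_mat_plus. unfold Bop. now rewrite dop_mat_scale. Qed.

Ltac eval_Z := repeat match goal with
  | |- context [(?x + ?y)%Z] =>
      progress (let r := eval vm_compute in (x + y)%Z in change (x + y)%Z with r)
  | |- context [(?x - ?y)%Z] =>
      progress (let r := eval vm_compute in (x - y)%Z in change (x - y)%Z with r)
  end.

Ltac expand_bracket :=
  unfold ham, P1, P2, dop_apply;
  cbn [dop_scale dop_sub dop_add dop_mul flat_map Lam Id Laminv Mult map app dsum fold_right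
       fst snd ev dshift];
  rewrite ?ev_dshift, ?ev_var_der_u, ?ev_var_der_v by (unfold zshift; auto);
  rewrite ?laxpow_zshift; unfold zshift; eval_Z.

Section Jet.
Variables (a b : Z -> R) (eps : R).
Hypothesis eps_neq0 : eps <> 0.
Hypothesis b_neq0 : forall k, b k <> 0.

Lemma lax_flow_u j :
  ev a b (dop_coef 0 (lax_rhs j)) / eps = ev a b (ham (P1 eps) Vu (hdens j)).
Proof.
  rewrite ev_dop_coef. unfold lax_rhs, dop_comm.
  rewrite dop_mat_sub, dop_mat_mul_Lax_r, dop_mat_mul_Lax_l, !dop_mat_Bop_plus.
  repeat match goal with |- context [Z.leb ?x ?y] => destruct (Z.leb_spec x y); try lia end.
  expand_bracket. pose proof (INR_fact_neq_0 j). field. auto.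
Qed.

Lemma lax_flow_v j :
  ev a b (dop_coef (-1) (lax_rhs j)) / (eps * b 0%Z) = ev a b (ham (P1 eps) Vv (hdens j)).
Proof.
  rewrite ev_dop_coef. unfold lax_rhs, dop_comm.
  rewrite dop_mat_sub, dop_mat_mul_Lax_r, dop_mat_mul_Lax_l, !dop_mat_Bop_plus.
  repeat match goal with |- context [Z.leb ?x ?y] => destruct (Z.leb_spec x y); try lia end.
  expand_bracket. pose proof (INR_fact_neq_0 j). pose proof (b_neq0 0). field. auto.
Qed.

Lemma recursion_u m :
  ev a b (ham (P2 eps) Vu (hdens m)) = INR (S m) * ev a b (ham (P1 eps) Vu (hdens (S m))).
Proof.
  expand_bracket.
  rewrite (laxpow_S a b m 0 1), (laxpow_S_r a b m (-1) 0). eval_Z.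
  rewrite fact_simpl, mult_INR. pose proof (INR_fact_neq_0 m). pose proof (not_0_INR (S m) (Nat.neq_succ_0 m)).
  field. auto.
Qed.

Lemma recursion_v m :
  ev a b (ham (P2 eps) Vv (hdens m)) = INR (S m) * ev a b (ham (P1 eps) Vv (hdens (S m))).
Proof.
  expand_bracket.
  rewrite (laxpow_S a b m 0 0), (laxpow_S_r a b m (-1) (-1)). eval_Z.
  rewrite (laxpow_sub_super b b_neq0 a m 0 : laxpow a b m 1 0 = b 1%Z * laxpow a b m 0 1),
    (laxpow_sub_super b b_neq0 a m (-2) : laxpow a b m (-1) (-2) = b (-1)%Z * laxpow a b m (-2) (-1)).
  rewrite fact_simpl, mult_INR. pose proof (INR_fact_neq_0 m). pose proof (not_0_INR (S m) (Nat.neq_succ_0 m)).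
  field. auto.
Qed.

End Jet.

Lemma lam_pt_0 eps x : lam_pt eps 0 x = x.
Proof. unfold lam_pt. simpl. field. Qed.

Theorem mainTheorem9 (eps : R) (heps : 0 < eps) :
  (forall (j : nat) (u v : R -> R) (x : R),
      (forall k : Z, 1 - IZR k * eps * x <> 0) ->
      deval eps u v x (dop_coef 0 (lax_rhs j)) / eps
        = deval eps u v x (ham (P1 eps) Vu (hdens j)) /\
      deval eps u v x (dop_coef (-1) (lax_rhs j)) / (eps * exp (v x))
        = deval eps u v x (ham (P1 eps) Vv (hdens j)))
  /\
  (forall (n : nat) (w : field) (u v : R -> R) (x : R),
      (1 <= n)%nat ->
      (forall k : Z, 1 - IZR k * eps * x <> 0) ->
      deval eps u v x (ham (P2 eps) w (hdens (n - 1)))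
        = INR n * deval eps u v x (ham (P1 eps) w (hdens n))).
Proof.
  assert (eps_neq0 : eps <> 0) by lra.
  assert (exp_neq0 : forall (v : R -> R) k x, exp (v (lam_pt eps k x)) <> 0)
    by (intros; apply exp_neq_0).
  split.
  - intros j u v x _. rewrite !deval_ev. split.
    + now apply lax_flow_u.
    + replace (v x) with (v (lam_pt eps 0 x)) by now rewrite lam_pt_0. now apply lax_flow_v.
  - intros [|n] w u v x Hn _; [lia |].
    rewrite Nat.sub_succ, Nat.sub_0_r, !deval_ev.
    destruct w; [apply recursion_u | apply recursion_v]; auto.
Qed.
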